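(* Fix $k\ge1$, times $0=t_0<t_1<\cdots<t_k$, withdrawal amounts $w_1,\dots,w_k>0$, constants $a_1,\dots,a_{k-1}>0$, and an initial investment $P>0$. Let $W_k$ be the amount remaining after the $k$-th withdrawal and $Z_0^*$ the lower bound variable, both as defined in the context. Then $$\mathbb P(W_k\ge0)\le\mathbb P(Z_0^*\le P).$$ (Here $W_k\ge0$ is exactly the event that the withdrawals $w_1,\dots,w_k$ at times $t_1,\dots,t_k$ can all be made.)
   Context: Wealth process: on a probability space $(\Omega,\mathcal F,\mathbb P)$, $X:[0,\infty)\times\Omega\to(0,\infty)$ is a process such that $\log X$ is a Lévy process (càdlàg paths, independent increments) with, for all $0\le s<t$, $\log\frac{X(t)}{X(s)}$ a Lévy alpha-stable random variable with shape $\alpha\in(0,2]$, skewness $\beta\in[-1,1]$, scale $\sigma(t-s)^{1/\alpha}$ ($\sigma>0$) and location $\mu(t-s)$ ($\mu\in\mathbb R$). Set $X_j=X(t_j)/X(t_{j-1})$ for $j\ge1$. Withdrawals: $W_1=PX_1-w_1$ and $W_j=W_{j-1}X_j-w_j$ for $j=2,\dots,k$. Required initial investment: $W_{k-1}^*=w_kX_k^{-1}$ and $W_{j-1}^*=X_j^{-1}(W_j^*+w_j)$ for $j=k-1,\dots,1$. Lower bound: with $b_j=\frac{a_j}{a_j+w_j}$, set $Z_{k-1}^*=W_{k-1}^*$ and $Z_{j-1}^*=X_j^{-1}(a_j+w_j)\left(\frac{Z_j^*}{a_j}\right)^{b_j}$ for $j=k-1,\dots,1$. *)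

From HB Require Import structures.
From mathcomp Require Import all_boot all_order all_algebra.
From mathcomp Require Import all_classical all_reals all_analysis.
Set Implicit Arguments. Unset Strict Implicit. Unset Printing Implicit Defensive.
Import Order.TTheory GRing.Theory Num.Theory.
Import numFieldNormedType.Exports.
Local Open Scope classical_set_scope.
Local Open Scope ring_scope.

Section Defs.
Context {R : realType} {d : measure_display} {T : measurableType d}.

(* Mutual independence of the real random variables Y 0, ..., Y (n-1):
   product rule for all Borel sets (taking B i = setT gives subfamilies). *)
Definition mutually_independent (P : probability T R) (n : nat)
  (Y : nat -> T -> R) : Prop :=
  forall B : nat -> set R, (forall i, measurable (B i)) ->
    P [set w | forall i, (i < n)%N -> B i (Y i w)] =
    (\prod_(i < n) P (Y i @^-1` B i))%E.

(* Characteristic function of the alpha-stable law S_alpha(c, beta, delta)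
   (scale c, skewness beta, location delta), standard (Samorodnitsky-Taqqu)
   parametrization:
   phi(u) = exp(i u delta - |c u|^alpha (1 - i beta sgn(u) Phi(u))),
   Phi(u) = tan(pi alpha / 2) if alpha <> 1, -(2/pi) ln|u| if alpha = 1.
   We give its real and imaginary parts. *)
Definition stable_Phi (alpha u : R) : R :=
  if alpha == 1 then - (2 / pi) * ln `|u| else tan (pi * alpha / 2).

Definition stable_cf_arg (alpha beta c delta u : R) : R :=
  u * delta + `|c * u| `^ alpha * beta * Num.sg u * stable_Phi alpha u.

Definition stable_cf_re (alpha beta c delta u : R) : R :=
  expR (- `|c * u| `^ alpha) * cos (stable_cf_arg alpha beta c delta u).

Definition stable_cf_im (alpha beta c delta u : R) : R :=
  expR (- `|c * u| `^ alpha) * sin (stable_cf_arg alpha beta c delta u).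

Definition stable_law (P : probability T R) (Y : T -> R)
  (alpha beta c delta : R) : Prop :=
  forall u : R,
    (\int[P]_w (cos (u * Y w))%:E = (stable_cf_re alpha beta c delta u)%:E)%E /\
    (\int[P]_w (sin (u * Y w))%:E = (stable_cf_im alpha beta c delta u)%:E)%E.

(* The wealth process X : [0,oo) x Omega -> (0,oo) such that log X is a Levy
   process with alpha-stable increments as in the context. *)
Definition stable_wealth_process (P : probability T R) (X : R -> T -> R)
  (alpha beta sigma mu : R) : Prop :=
  [/\ (forall t, 0 <= t -> measurable_fun setT (X t)) /\
      (forall t w, 0 <= t -> 0 < X t w),
      P [set w | ln (X 0 w) = 0] = 1%E,
      ((forall w t, 0 <= t ->
         (fun r => ln (X r w)) @ t^'+ --> ln (X t w)) /\
       (forall w t, 0 < t -> exists l : R,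
          (fun r => ln (X r w)) @ t^'- --> l)),
      (forall (n : nat) (s : nat -> R), 0 <= s 0%N ->
         (forall i, (i < n)%N -> s i < s i.+1) ->
         mutually_independent P n
           (fun i w => ln (X (s i.+1) w / X (s i) w))) &
      (forall s t, 0 <= s -> s < t ->
         stable_law P (fun w => ln (X t w / X s w))
           alpha beta (sigma * (t - s) `^ alpha^-1) (mu * (t - s)))].

End Defs.

Definition ret {R : realType} {T : Type} (X : R -> T -> R) (t : nat -> R)
  (j : nat) (w : T) : R := X (t j) w / X (t j.-1) w.

Fixpoint Wamt {R : realType} {T : Type} (X : R -> T -> R) (t : nat -> R)
  (wd : nat -> R) (P0 : R) (j : nat) (w : T) : R :=
  match j with
  | 0 => P0
  | j'.+1 => Wamt X t wd P0 j' w * ret X t j w - wd j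
  end.

(* Lower bound variable, computed backwards:
   Zaux k 0 = Z*_{k-1} = W*_{k-1} = w_k X_k^{-1},
   Zaux k (n+1) = Z*_{j-1} with j = k-1-n,
     Z*_{j-1} = X_j^{-1} (a_j + w_j) (Z*_j / a_j)^{b_j}, b_j = a_j/(a_j+w_j). *)
Fixpoint Zaux {R : realType} {T : Type} (X : R -> T -> R) (t : nat -> R)
  (wd a : nat -> R) (k n : nat) (w : T) : R :=
  match n with
  | 0 => wd k / ret X t k w
  | n'.+1 =>
      let j := (k - n)%N in
      (ret X t j w)^-1 * (a j + wd j) *
        powR (Zaux X t wd a k n' w / a j) (a j / (a j + wd j))
  end.

Definition Zstar0 {R : realType} {T : Type} (X : R -> T -> R) (t : nat -> R)
  (wd a : nat -> R) (k : nat) (w : T) : R := Zaux X t wd a k k.-1 w.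

From HB Require Import structures.
From mathcomp Require Import all_boot all_order all_algebra.
From mathcomp Require Import all_classical all_reals all_analysis.
From mathcomp Require Import zify ring measurable_realfun measurable_fun_approximation.
Set Implicit Arguments. Unset Strict Implicit. Unset Printing Implicit Defensive.
Import Order.TTheory GRing.Theory Num.Theory.
Import numFieldNormedType.Exports.
Local Open Scope classical_set_scope.
Local Open Scope ring_scope.

(* The proof is pathwise.  Reading the recursions backwards, the wealth needed
   just before the j-th withdrawal is W_{j-1} X_j = W_j + w_j, and weighted
   AM-GM with weights b_j, 1 - b_j gives
   (a_j + w_j) (Z/a_j)^{b_j} <= Z + w_j.  Hence, if all withdrawals can be
   made (W_k >= 0), induction from j = k down to j = 1 yields
   0 < Z*_{j-1} <= W_{j-1}, and at j = 1 this is Z*_0 <= W_0 = P.  So the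
   event {W_k >= 0} is contained in {Z*_0 <= P}, and monotonicity of P
   finishes once both events are known to be measurable. *)

Lemma mul_powR_le_add (R : realType) (z a w : R) : 0 < z -> 0 < a -> 0 < w ->
  (a + w) * powR (z / a) (a / (a + w)) <= z + w.
Proof.
move=> z_gt0 a_gt0 w_gt0.
have aw_gt0 : 0 < a + w by rewrite addr_gt0.
set b := a / (a + w).
have b_gt0 : 0 < b by rewrite divr_gt0.
have b'_gt0 : 0 < 1 - b by rewrite /b subr_gt0 ltr_pdivrMr // mul1r ltrDl.
have za_ge0 : 0 <= z / a by rewrite divr_ge0 ?ltW.
have conj_b : (b^-1)^-1 + ((1 - b)^-1)^-1 = 1 by rewrite !invrK addrCA subrr addr0.
(* Young's inequality for x = (z/a)^b, y = 1 and exponents 1/b, 1/(1-b). *)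
have := conjugate_powR (powR_ge0 (z / a) b) ler01
  (_ : 0 < b^-1) (_ : 0 < (1 - b)^-1).
move=> /(_ ltac:(by rewrite invr_gt0) ltac:(by rewrite invr_gt0) conj_b).
rewrite -powRrM mulfV ?gt_eqF // powRr1 // powR1 !invrK mulr1.
move=> /(ler_wpM2l (ltW aw_gt0)) /le_trans; apply.
by rewrite /b le_eqVlt; apply/orP; left; apply/eqP; field; rewrite !gt_eqF.
Qed.

Lemma withdrawal_backward_step (R : realType) (r z a w v : R) :
  0 < r -> 0 < z -> 0 < a -> 0 < w -> z <= v * r - w ->
  r^-1 * (a + w) * powR (z / a) (a / (a + w)) <= v.
Proof.
move=> r_gt0 z_gt0 a_gt0 w_gt0 zle.
rewrite -mulrA mulrC ler_pdivrMr //.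
apply: le_trans (mul_powR_le_add z_gt0 a_gt0 w_gt0) _.
by rewrite -lerBrDr.
Qed.

Lemma increasing_from0_ge0 (R : realType) (k : nat) (t : nat -> R) :
  t 0%N = 0 -> (forall j, (j < k)%N -> t j < t j.+1) ->
  forall j, (j <= k)%N -> 0 <= t j.
Proof.
move=> t0 t_incr; elim=> [|j IHj] jk; first by rewrite t0.
exact: le_trans (IHj (ltnW jk)) (ltW (t_incr _ jk)).
Qed.

Section Pathwise.
Variables (R : realType) (T : Type) (X : R -> T -> R) (t : nat -> R).
Variables (wd a : nat -> R) (P0 : R) (k : nat).
Hypothesis k_ge1 : (1 <= k)%N.
Hypothesis returns_gt0 : forall j w, (j <= k)%N -> 0 < ret X t j w.
Hypothesis wd_gt0 : forall j, (1 <= j <= k)%N -> 0 < wd j.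
Hypothesis a_gt0 : forall j, (1 <= j <= k.-1)%N -> 0 < a j.

Lemma Zaux_gt0_le_Wamt w : 0 <= Wamt X t wd P0 k w ->
  forall n, (n <= k.-1)%N ->
  0 < Zaux X t wd a k n w /\ Zaux X t wd a k n w <= Wamt X t wd P0 (k.-1 - n) w.
Proof.
move=> Wk_ge0; elim=> [|n IHn] n_lt /=.
  have wk_gt0 : 0 < wd k by rewrite wd_gt0 ?k_ge1 ?leqnn.
  rewrite subn0; split; first by rewrite divr_gt0 ?returns_gt0.
  rewrite ler_pdivrMr ?returns_gt0 // -subr_ge0.
  by move: Wk_ge0; rewrite -(prednK k_ge1).
have [Z_gt0 Z_le] := IHn (ltnW n_lt).
set j := (k - n.+1)%N.
have j_ge1 : (1 <= j)%N by rewrite /j; lia.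
have j_le : (j <= k)%N by exact: leq_subr.
have aj_gt0 : 0 < a j by rewrite a_gt0 // j_ge1 /j; lia.
have wj_gt0 : 0 < wd j by rewrite wd_gt0 // j_ge1.
have -> : (k.-1 - n.+1 = j.-1)%N by rewrite /j; lia.
have Wj : Wamt X t wd P0 j w = Wamt X t wd P0 j.-1 w * ret X t j w - wd j.
  by rewrite -{1}(prednK j_ge1) /= (prednK j_ge1).
have Z_le_Wj : Zaux X t wd a k n w <= Wamt X t wd P0 j.-1 w * ret X t j w - wd j.
  by rewrite -Wj /j; have -> : (k - n.+1 = k.-1 - n)%N by lia.
split; last exact: withdrawal_backward_step (returns_gt0 w j_le) Z_gt0 aj_gt0 wj_gt0 Z_le_Wj.
by rewrite !mulr_gt0 ?invr_gt0 ?addr_gt0 ?returns_gt0 ?powR_gt0 ?divr_gt0.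
Qed.

Lemma Zstar0_le_of_Wamt_ge0 w :
  0 <= Wamt X t wd P0 k w -> Zstar0 X t wd a k w <= P0.
Proof.
by move=> /Zaux_gt0_le_Wamt /(_ k.-1 (leqnn _)) [_]; rewrite subnn.
Qed.

End Pathwise.

Lemma measurable_funV_gt0 (R : realType) (d : measure_display)
  (T : measurableType d) (f : T -> R) :
  measurable_fun setT f -> (forall w, 0 < f w) ->
  measurable_fun setT (fun w => (f w)^-1).
Proof.
move=> mf f_gt0.
have -> : (fun w => (f w)^-1) = (fun w => powR (f w) (-1)).
  by apply: funext => w; rewrite powR_inv1 // ltW.
exact: measurableT_comp (measurable_powR (-1)) mf.
Qed.

Section Measurability.
Variables (R : realType) (d : measure_display) (T : measurableType d).
Variables (X : R -> T -> R) (t : nat -> R) (wd a : nat -> R) (P0 : R) (k : nat).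
Hypothesis X_measurable : forall j, (j <= k)%N -> measurable_fun setT (X (t j)).
Hypothesis X_gt0 : forall j w, (j <= k)%N -> 0 < X (t j) w.

Lemma ret_measurable j : (j <= k)%N -> measurable_fun setT (ret X t j).
Proof.
move=> jk; have jk' : (j.-1 <= k)%N by apply: leq_trans jk; exact: leq_pred.
apply: measurable_funM; first exact: X_measurable.
by apply: measurable_funV_gt0 => [|w]; [exact: X_measurable | exact: X_gt0].
Qed.

Lemma ret_gt0 j w : (j <= k)%N -> 0 < ret X t j w.
Proof.
move=> jk; have jk' : (j.-1 <= k)%N by apply: leq_trans jk; exact: leq_pred.
by rewrite divr_gt0 ?X_gt0.
Qed.

Lemma Wamt_measurable j : (j <= k)%N -> measurable_fun setT (Wamt X t wd P0 j).
Proof.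
elim: j => [|j IHj] jk /=; first exact: measurable_cst.
apply: measurable_funB; last exact: measurable_cst.
by apply: measurable_funM; [exact/IHj/ltnW | exact: ret_measurable].
Qed.

Lemma Zaux_measurable n : (n <= k.-1)%N -> measurable_fun setT (Zaux X t wd a k n).
Proof.
elim: n => [|n IHn] nk /=.
  apply: measurable_funM; first exact: measurable_cst.
  by apply: measurable_funV_gt0 => [|w]; [exact: ret_measurable | exact: ret_gt0].
have jk : (k - n.+1 <= k)%N by exact: leq_subr.
apply: measurable_funM.
  apply: measurable_funM; last exact: measurable_cst.
  by apply: measurable_funV_gt0 => [|w]; [exact: ret_measurable | exact: ret_gt0].
apply: measurableT_comp (measurable_powR _) _.
by apply: measurable_funM; [exact/IHn/ltnW | exact: measurable_cst].
Qed.

End Measurability.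

Lemma measurable_set_le (R : realType) (d : measure_display) (T : measurableType d)
  (f g : T -> R) : measurable_fun setT f -> measurable_fun setT g ->
  measurable [set w | f w <= g w].
Proof.
by move=> mf mg; rewrite -[X in measurable X]setTI; exact: measurable_fun_le.
Qed.

Theorem theorem6 (R : realType) (d : measure_display) (T : measurableType d)
  (P : probability T R) (X : R -> T -> R)
  (alpha beta sigma mu : R)
  (k : nat) (t : nat -> R) (wd a : nat -> R) (P0 : R) :
  0 < alpha <= 2 -> -1 <= beta <= 1 -> 0 < sigma ->
  stable_wealth_process P X alpha beta sigma mu ->
  (1 <= k)%N ->
  t 0%N = 0 -> (forall j, (j < k)%N -> t j < t j.+1) ->
  (forall j, (1 <= j <= k)%N -> 0 < wd j) ->
  (forall j, (1 <= j <= k.-1)%N -> 0 < a j) ->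
  0 < P0 ->
  (P [set w | (0 <= Wamt X t wd P0 k w)%R] <=
   P [set w | (Zstar0 X t wd a k w <= P0)%R])%E.
Proof.
move=> _ _ _ [[X_meas X_pos] _ _ _ _] k_ge1 t0 t_incr wd_gt0 a_gt0 _.
have t_ge0 := increasing_from0_ge0 t0 t_incr.
have Xt_meas j : (j <= k)%N -> measurable_fun setT (X (t j)).
  by move=> jk; exact/X_meas/t_ge0.
have Xt_gt0 j w : (j <= k)%N -> 0 < X (t j) w.
  by move=> jk; exact/X_pos/t_ge0.
apply: le_measure; rewrite ?inE.
- apply: measurable_set_le; first exact: measurable_cst.
  exact: Wamt_measurable Xt_meas Xt_gt0 _ _.
- apply: measurable_set_le; last exact: measurable_cst.
  exact: Zaux_measurable Xt_meas Xt_gt0 _ (leqnn _).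
- move=> w /=; apply: Zstar0_le_of_Wamt_ge0 => //.
  exact: ret_gt0 Xt_gt0.
Qed.
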